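(* Let ${\bf S}\in\{{\bf Tmd},{\bf Tm4d}\}$. Then for every $n\geq 3$, the formula $\gamma(n)$ is not a theorem of ${\bf S}$.
   Context: Formulas are built from a denumerable set of propositional variables $p_1,p_2,\ldots$ by the unary connectives $\neg$, $\Box$ and the binary connective $\to$; $For$ is the set of all formulas. Abbreviations: $\Diamond\alpha:=\neg\Box\neg\alpha$, $\alpha\vee\beta:=\neg\alpha\to\beta$. For formulas $\alpha_1,\ldots,\alpha_k$ ($k\ge 2$), $\bigvee\{\alpha_1,\ldots,\alpha_k\}:=((\ldots((\alpha_1\vee\alpha_2)\vee\alpha_3)\vee\ldots)\vee\alpha_k)$. For $n\geq 3$: $\alpha(n)=\bigvee\{p_j: 1\le j\le n\}$, $\beta_i(n)=\bigvee\{p_j:1\le j\le n,\ j\ne i\}$ for $1\le i\le n$, and $\gamma(n)=\bigvee\{\Box\neg\Box\alpha(n)\to\Box\neg\Box\beta_i(n): 1\le i\le n\}$. ${\bf Tmd}$ is the Hilbert calculus whose axioms are all instances (over $For$) of the axiom schemas of a standard Hilbert calculus for classical propositional logic in the signature $\{\neg,\to\}$, plus all instances of: (K) $\Box(\alpha\to\beta)\to(\Box\alpha\to\Box\beta)$; (Kdet) $\Box(\alpha\to\beta)\to(\Diamond\alpha\to\Box\beta)$; (K2) $\Diamond(\alpha\to\beta)\to(\Box\alpha\to\Diamond\beta)$; (M1) $\neg\Diamond\alpha\to\Box(\alpha\to\beta)$; (M2) $\Box\beta\to\Box(\alpha\to\beta)$; (M3) $\Diamond\beta\to\Diamond(\alpha\to\beta)$;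 (M4) $\Diamond\neg\alpha\to\Diamond(\alpha\to\beta)$; (T) $\Box\alpha\to\alpha$; (DN1) $\Box\alpha\to\Box\neg\neg\alpha$; (DN2) $\Box\neg\neg\alpha\to\Box\alpha$; modus ponens is the only rule. ${\bf Tm4d}$ (also written ${\bf T4md}$) is ${\bf Tmd}$ plus (4) $\Box\alpha\to\Box\Box\alpha$. *)

From Stdlib Require Import List Arith.
Import ListNotations.

Inductive form : Type :=
| Var : nat -> form
| Neg : form -> form
| Box : form -> form
| Imp : form -> form -> form.

Definition Dia (a : form) : form := Neg (Box (Neg a)).
Definition Or (a b : form) : form := Imp (Neg a) b.

(* Left-nested big disjunction: bigor [a1;...;ak] = ((a1 ∨ a2) ∨ ...) ∨ ak.
   (Only used with k >= 2; the value on [] is irrelevant.) *)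
Definition bigor (l : list form) : form :=
  match l with
  | [] => Var 0
  | a :: t => fold_left Or t a
  end.

Definition alpha (n : nat) : form := bigor (map Var (seq 1 n)).

Definition beta (n i : nat) : form :=
  bigor (map Var (filter (fun j => negb (Nat.eqb j i)) (seq 1 n))).

Definition gamma (n : nat) : form :=
  bigor (map (fun i => Imp (Box (Neg (Box (alpha n)))) (Box (Neg (Box (beta n i)))))
             (seq 1 n)).

(* Axioms of Tmd: a standard Hilbert calculus for classical propositional
   logic in {¬,→} (Mendelson's A1–A3), plus the modal schemas. *)
Inductive TmdAx : form -> Prop :=
| A1 a b : TmdAx (Imp a (Imp b a))
| A2 a b c : TmdAx (Imp (Imp a (Imp b c)) (Imp (Imp a b) (Imp a c)))
| A3 a b : TmdAx (Imp (Imp (Neg b) (Neg a)) (Imp (Imp (Neg b) a) b))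
| AxK a b : TmdAx (Imp (Box (Imp a b)) (Imp (Box a) (Box b)))
| AxKdet a b : TmdAx (Imp (Box (Imp a b)) (Imp (Dia a) (Box b)))
| AxK2 a b : TmdAx (Imp (Dia (Imp a b)) (Imp (Box a) (Dia b)))
| AxM1 a b : TmdAx (Imp (Neg (Dia a)) (Box (Imp a b)))
| AxM2 a b : TmdAx (Imp (Box b) (Box (Imp a b)))
| AxM3 a b : TmdAx (Imp (Dia b) (Dia (Imp a b)))
| AxM4 a b : TmdAx (Imp (Dia (Neg a)) (Dia (Imp a b)))
| AxT a : TmdAx (Imp (Box a) a)
| AxDN1 a : TmdAx (Imp (Box a) (Box (Neg (Neg a))))
| AxDN2 a : TmdAx (Imp (Box (Neg (Neg a))) (Box a)).

Inductive Tm4dAx : form -> Prop :=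
| Tm4d_Tmd a : TmdAx a -> Tm4dAx a
| Ax4 a : Tm4dAx (Imp (Box a) (Box (Box a))).

Inductive Prov (Ax : form -> Prop) : form -> Prop :=
| Prov_ax a : Ax a -> Prov Ax a
| Prov_mp a b : Prov Ax (Imp a b) -> Prov Ax a -> Prov Ax b.

From Stdlib Require Import List Arith Bool Lia.
Import ListNotations.

(* Interpret [□φ] as "φ is strongly true", where strong truth and strong
   falsity are syntactic properties defined by mutual recursion, [□φ] being
   strongly false only when φ is not strongly true and passes a refutability
   test.  For every valuation of the variables and every refutability test,
   all axioms of Tm4d are true and modus ponens preserves truth.  Take all
   variables false and call φ refutable when it mentions each of p_1, ...,
   p_n: then □¬□α(n) is true, but each □¬□β_i(n) is false because β_i(n)
   misses p_i, so γ(n) is false. *)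

Section StrongTruth.

Variable v : nat -> bool.
Variable refutable : form -> bool.

Fixpoint strong_true (a : form) : bool :=
  match a with
  | Var _ => false
  | Neg a => strong_false a
  | Box a => strong_true a
  | Imp a b => strong_false a || strong_true b
  end
with strong_false (a : form) : bool :=
  match a with
  | Var _ => false
  | Neg a => strong_true a
  | Box a => negb (strong_true a) && refutable a
  | Imp a b => strong_true a && strong_false b
  end.

Fixpoint eval (a : form) : bool :=
  match a with
  | Var j => v j
  | Neg a => negb (eval a)
  | Box a => strong_true a
  | Imp a b => negb (eval a) || eval b
  end.

Lemma strong_true_false_eval (a : form) :
  (strong_true a = true -> eval a = true) /\
  (strong_false a = true -> eval a = false).
Proof.
  induction a as [j | a [IHt IHf] | a [IHt IHf] | a [IHat IHaf] b [IHbt IHbf]];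
    simpl.
  - split; discriminate.
  - split; intro H; [rewrite IHf | rewrite IHt]; auto.
  - split; [auto |].
    intro H; apply andb_true_iff in H as [H _]; apply negb_true_iff, H.
  - split; intro H.
    + apply orb_true_iff in H as [H | H];
        [rewrite IHaf | rewrite IHbt, orb_true_r]; auto.
    + apply andb_true_iff in H as [Ha Hb]; rewrite IHat, IHbf; auto.
Qed.

Lemma strong_true_eval (a : form) : strong_true a = true -> eval a = true.
Proof. apply strong_true_false_eval. Qed.

Lemma strong_false_eval (a : form) : strong_false a = true -> eval a = false.
Proof. apply strong_true_false_eval. Qed.

Lemma Tm4dAx_eval (a : form) : Tm4dAx a -> eval a = true.
Proof.
  intros [a' Hax | a']; [destruct Hax |]; simpl;
    repeat match goal with
    | |- context [strong_true ?x] =>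
        generalize (strong_true_eval x); destruct (strong_true x)
    | |- context [strong_false ?x] =>
        generalize (strong_false_eval x); destruct (strong_false x)
    | |- context [eval ?x] => destruct (eval x)
    end; simpl; intuition discriminate.
Qed.

Lemma Prov_eval (S : form -> Prop) (a : form) :
  (forall b, S b -> Tm4dAx b) -> Prov S a -> eval a = true.
Proof.
  intros HS H; induction H as [a Ha | a b _ IHab _ IHa].
  - apply Tm4dAx_eval, HS, Ha.
  - simpl in IHab; rewrite IHa in IHab; exact IHab.
Qed.

Lemma eval_bigor (l : list form) : l <> [] -> eval (bigor l) = existsb eval l.
Proof.
  destruct l as [| a l]; [easy |]; intros _; simpl.
  revert a; induction l as [| b l IH]; intro a; simpl.
  - now rewrite orb_false_r.
  - now rewrite IH; simpl; rewrite negb_involutive, orb_assoc.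
Qed.

End StrongTruth.

Fixpoint occurs (j : nat) (a : form) : bool :=
  match a with
  | Var k => Nat.eqb j k
  | Neg a | Box a => occurs j a
  | Imp a b => occurs j a || occurs j b
  end.

Definition mentions_all (n : nat) (a : form) : bool :=
  forallb (fun j => occurs j a) (seq 1 n).

Lemma occurs_bigor (j : nat) (l : list form) :
  l <> [] -> occurs j (bigor l) = existsb (occurs j) l.
Proof.
  destruct l as [| a l]; [easy |]; intros _; simpl.
  revert a; induction l as [| b l IH]; intro a; simpl.
  - now rewrite orb_false_r.
  - now rewrite IH; simpl; rewrite orb_assoc.
Qed.

(* [bigor []] is [Var 0], hence the restriction to [j <> 0]. *)
Lemma occurs_bigor_Var (j : nat) (l : list nat) :
  j <> 0 -> occurs j (bigor (map Var l)) = existsb (Nat.eqb j) l.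
Proof.
  intro Hj; destruct l as [| k l].
  - now destruct j.
  - rewrite occurs_bigor by discriminate.
    now induction (k :: l) as [| m l' IH]; simpl; [| rewrite IH].
Qed.

Lemma mentions_all_alpha (n : nat) : mentions_all n (alpha n) = true.
Proof.
  apply forallb_forall; intros j Hj; apply in_seq in Hj; unfold alpha.
  rewrite occurs_bigor_Var by lia.
  apply existsb_exists; exists j; split.
  - apply in_seq; lia.
  - apply Nat.eqb_refl.
Qed.

Lemma mentions_all_beta (n i : nat) :
  1 <= i <= n -> mentions_all n (beta n i) = false.
Proof.
  intro Hi; apply not_true_iff_false; intro H.
  assert (Hocc : occurs i (beta n i) = true)
    by (apply (proj1 (forallb_forall _ _) H), in_seq; lia).
  unfold beta in Hocc; rewrite occurs_bigor_Var in Hocc by lia.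
  apply existsb_exists in Hocc as [k [Hk Hik]].
  apply filter_In in Hk as [_ Hk]; apply Nat.eqb_eq in Hik; subst k.
  now rewrite Nat.eqb_refl in Hk.
Qed.

Lemma eval_alpha_false (refutable : form -> bool) (n : nat) :
  eval (fun _ => false) refutable (alpha n) = false.
Proof.
  destruct n as [| n]; [reflexivity |].
  unfold alpha; rewrite eval_bigor by discriminate.
  now induction (seq 1 (S n)).
Qed.

Lemma eval_gamma_false (n : nat) :
  1 <= n -> eval (fun _ => false) (mentions_all n) (gamma n) = false.
Proof.
  intro Hn; apply not_true_iff_false; intro H.
  unfold gamma in H.
  rewrite eval_bigor in H by (destruct n; [lia | discriminate]).
  apply existsb_exists in H as [d [Hd H]].
  apply in_map_iff in Hd as [i [<- Hi]]; apply in_seq in Hi.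
  assert (Halpha : strong_true (mentions_all n) (alpha n) = false).
  { apply not_true_iff_false; intro Ht.
    apply strong_true_eval with (v := fun _ => false) in Ht.
    now rewrite eval_alpha_false in Ht. }
  simpl in H.
  now rewrite Halpha, mentions_all_alpha, mentions_all_beta, andb_false_r in H
    by lia.
Qed.

Theorem mainTheorem16 :
  forall S : form -> Prop, (S = TmdAx \/ S = Tm4dAx) ->
  forall n : nat, 3 <= n -> ~ Prov S (gamma n).
Proof.
  intros S HS n Hn Hprov.
  assert (HSax : forall a, S a -> Tm4dAx a)
    by (destruct HS; subst; [exact Tm4d_Tmd | trivial]).
  pose proof (Prov_eval (fun _ => false) (mentions_all n) S (gamma n) HSax Hprov)
    as Heval.
  now rewrite eval_gamma_false in Heval by lia.
Qed.
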